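(* Let $\mathcal C$ be a small cancellative category (all morphisms are monomorphisms and epimorphisms). If $\mathcal C$ contains no nonidentity retractions, then for every morphism $\alpha$ of $\mathcal C$ the comma category $\mathfrak F\mathcal C/\alpha$ is a partially ordered set.
   Context: The factorization category $\mathfrak F\mathcal C$ has the morphisms of $\mathcal C$ as objects; for $\alpha:a\to b$ and $\beta:a'\to b'$, a morphism $\alpha\to\beta$ is a pair $(f,g)$ with $f:a'\to a$, $g:b\to b'$ and $g\circ\alpha\circ f=\beta$; composition of $(f_1,g_1):\alpha\to\beta$ and $(f_2,g_2):\beta\to\gamma$ is $(f_1\circ f_2,g_2\circ g_1)$. The comma category $\mathfrak F\mathcal C/\alpha$ has objects pairs $(\beta,\varphi)$ with $\varphi:\beta\to\alpha$ in $\mathfrak F\mathcal C$, and morphisms $\psi:\beta\to\beta'$ with $\varphi'\circ\psi=\varphi$. A retraction is a morphism $r$ for which there is $s$ with $r\circ s$ an identity. A small category is a partially ordered set if between any two objects there is at most one morphism and objects with morphisms in both directions coincide. *)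

Set Implicit Arguments.

Record Cat := {
  Ob : Type;
  Hom : Ob -> Ob -> Type;
  cid : forall a, Hom a a;
  comp : forall a b d, Hom b d -> Hom a b -> Hom a d;
  comp_assoc : forall a b c d (h : Hom c d) (g : Hom b c) (f : Hom a b),
      comp h (comp g f) = comp (comp h g) f;
  comp_id_l : forall a b (f : Hom a b), comp (cid b) f = f;
  comp_id_r : forall a b (f : Hom a b), comp f (cid a) = f
}.
Arguments cid {_} _.
Arguments comp {_ _ _ _} _ _.

Section Defs.
Variable C : Cat.

Definition monic {a b} (f : Hom C a b) : Prop :=
  forall x (g h : Hom C x a), comp f g = comp f h -> g = h.
Definition epic {a b} (f : Hom C a b) : Prop :=
  forall y (g h : Hom C b y), comp g f = comp h f -> g = h.

Definition cancellative : Prop :=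
  forall a b (f : Hom C a b), monic f /\ epic f.

Definition is_identity {a b} (r : Hom C a b) : Prop :=
  exists e : a = b, eq_rect a (fun x => Hom C a x) (cid a) b e = r.

Definition retraction {a b} (r : Hom C a b) : Prop :=
  exists s : Hom C b a, comp r s = cid b.

Definition no_nonidentity_retractions : Prop :=
  forall a b (r : Hom C a b), retraction r -> is_identity r.

Record FObj := { fsrc : Ob C; ftgt : Ob C; fmor : Hom C fsrc ftgt }.

Record FHom (x y : FObj) := {
  fh_f : Hom C (fsrc y) (fsrc x);
  fh_g : Hom C (ftgt x) (ftgt y);
  fh_eq : comp fh_g (comp (fmor x) fh_f) = fmor y
}.

Lemma fcomp_eq (x y z : FObj) (p : FHom x y) (q : FHom y z) :
  comp (comp (fh_g q) (fh_g p)) (comp (fmor x) (comp (fh_f p) (fh_f q))) = fmor z.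
Proof.
  destruct p as [f1 g1 e1], q as [f2 g2 e2]; simpl.
  rewrite <- e2, <- e1.
  rewrite !comp_assoc. reflexivity.
Qed.

Definition fcomp (x y z : FObj) (p : FHom x y) (q : FHom y z) : FHom x z :=
  {| fh_f := comp (fh_f p) (fh_f q); fh_g := comp (fh_g q) (fh_g p);
     fh_eq := fcomp_eq p q |}.

Record CommaObj (alpha : FObj) := { cdom : FObj; cmap : FHom cdom alpha }.

Record CommaHom (alpha : FObj) (X Y : CommaObj alpha) := {
  cpsi : FHom (cdom X) (cdom Y);
  ceq : fcomp cpsi (cmap Y) = cmap X
}.

End Defs.

Definition is_poset (O : Type) (H : O -> O -> Type) : Prop :=
  (forall x y (f g : H x y), f = g) /\ (forall x y, H x y -> H y x -> x = y).

(** The comma category F C/alpha is the slice of F C over alpha, and F C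
    inherits both hypotheses from C, since its morphisms are pairs of
    morphisms of C composed componentwise.  In a slice of a cancellative
    category the structure map is monic, so there is at most one morphism
    between two objects over the base; and if there are morphisms in both
    directions, their composite is an endomorphism over the base, hence the
    identity, which makes one of them a retraction and thus an identity. *)
From Stdlib Require Import ProofIrrelevance.

Section Factorization.
Variable C : Cat.

Lemma FHom_ext (x y : FObj C) (p q : FHom x y) :
  fh_f p = fh_f q -> fh_g p = fh_g q -> p = q.
Proof.
  destruct p as [f g e], q as [f' g' e']; simpl; intros -> ->.
  f_equal; apply proof_irrelevance.
Qed.

Lemma CommaHom_ext (alpha : FObj C) (X Y : CommaObj alpha) (u v : CommaHom X Y) :
  cpsi u = cpsi v -> u = v.
Proof.
  destruct u, v; simpl; intros ->; f_equal; apply proof_irrelevance.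
Qed.

Lemma fid_eq (x : FObj C) : comp (cid (ftgt x)) (comp (fmor x) (cid (fsrc x))) = fmor x.
Proof. now rewrite comp_id_l, comp_id_r. Qed.

Definition fid (x : FObj C) : FHom x x :=
  {| fh_f := cid (fsrc x); fh_g := cid (ftgt x); fh_eq := fid_eq x |}.

Definition FCat : Cat.
Proof.
  refine {| Ob := FObj C; Hom := @FHom C; cid := fid;
            comp := fun x y z q p => fcomp p q |}.
  - intros; apply FHom_ext; simpl; now rewrite comp_assoc.
  - intros; apply FHom_ext; simpl; rewrite ?comp_id_l, ?comp_id_r; reflexivity.
  - intros; apply FHom_ext; simpl; rewrite ?comp_id_l, ?comp_id_r; reflexivity.
Defined.

Lemma FCat_cancellative : cancellative C -> cancellative FCat.
Proof.
  intros Hc x y r; split.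
  - intros w p q E.
    apply FHom_ext.
    + apply (proj2 (Hc _ _ (fh_f r))); exact (f_equal (@fh_f _ _ _) E).
    + apply (proj1 (Hc _ _ (fh_g r))); exact (f_equal (@fh_g _ _ _) E).
  - intros w p q E.
    apply FHom_ext.
    + apply (proj1 (Hc _ _ (fh_f r))); exact (f_equal (@fh_f _ _ _) E).
    + apply (proj2 (Hc _ _ (fh_g r))); exact (f_equal (@fh_g _ _ _) E).
Qed.

Lemma FCat_no_nonidentity_retractions :
  no_nonidentity_retractions C -> no_nonidentity_retractions FCat.
Proof.
  intros Hr [a b m] [a' b' m'] [rf rg re] [[sf sg se] E].
  pose proof (f_equal (@fh_f _ _ _) E) as Ef; pose proof (f_equal (@fh_g _ _ _) E) as Eg.
  cbn in Ef, Eg; clear E se; cbn in *.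
  destruct (Hr _ _ sf (ex_intro _ rf Ef)) as [ea Hsf].
  destruct (Hr _ _ rg (ex_intro _ sg Eg)) as [eb Hrg].
  destruct ea, eb; cbn in Hsf, Hrg; subst sf rg.
  rewrite comp_id_l in Ef; subst rf.
  assert (m' = m) as -> by now rewrite <- re, comp_id_l, comp_id_r.
  exists eq_refl; now apply FHom_ext.
Qed.

End Factorization.

Section Slice.
Context {D : Cat}.
Hypothesis D_cancellative : cancellative D.

Lemma slice_hom_unique {a b t} (m : Hom D a t) (n : Hom D b t) (u v : Hom D a b) :
  comp n u = m -> comp n v = m -> u = v.
Proof.
  intros Hu Hv; apply (proj1 (D_cancellative _ _ n)); now rewrite Hu, Hv.
Qed.

Hypothesis D_no_nonidentity_retractions : no_nonidentity_retractions D.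

Lemma slice_cycle_identity {a b t} (m : Hom D a t) (n : Hom D b t)
    (u : Hom D a b) (v : Hom D b a) :
  comp n u = m -> comp m v = n -> is_identity D v.
Proof.
  intros Hu Hv; apply D_no_nonidentity_retractions; exists u.
  apply (slice_hom_unique m m).
  - now rewrite comp_assoc, Hv.
  - apply comp_id_r.
Qed.

End Slice.

Theorem mainTheorem14 (C : Cat) :
  cancellative C -> no_nonidentity_retractions C ->
  forall (a b : Ob C) (alpha : Hom C a b),
    @is_poset (@CommaObj C {| fsrc := a; ftgt := b; fmor := alpha |})
             (@CommaHom C {| fsrc := a; ftgt := b; fmor := alpha |}).
Proof.
  intros Hc Hr a b alpha.
  pose proof (FCat_cancellative _ Hc) as Hc'.
  pose proof (FCat_no_nonidentity_retractions _ Hr) as Hr'.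
  split.
  - intros X Y u v; apply CommaHom_ext.
    exact (slice_hom_unique Hc' (cmap X) (cmap Y) _ _ (ceq u) (ceq v)).
  - intros [x phi] [y phi'] psi [chi Hchi].
    destruct (slice_cycle_identity Hc' Hr' phi phi' _ _ (ceq psi) Hchi)
      as [e Hid].
    destruct e; cbn in Hid; subst chi.
    cbn in Hchi; subst phi'; f_equal; symmetry; exact (comp_id_r (FCat C) _ _ phi).
Qed.
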